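(* With the notation of the context, the following equality of (virtual) 3-sort species holds: \[ \mathcal G_{\neq 2}(X, X+Y, Z) = \mathcal M\circ\mathcal P - XY - \mathcal E_2(Z). \]
   Context: A (combinatorial) species is a functor from finite sets with bijections to finite sets with bijections; a $k$-sort species is a functor from $k$-tuples of finite sets with sort-preserving bijections to finite sets with bijections; species are equal if naturally isomorphic, and virtual species are formal differences of species. Sum: $(F+G)[U]=F[U]\sqcup G[U]$; product: $(F\cdot G)[U]=\bigsqcup_{U=V+W}F[V]\times G[W]$ over ordered decompositions into disjoint (possibly empty) parts (componentwise for $k$-tuples); composition of a 1-sort $F$ with a $k$-sort $G$ satisfying $G[\emptyset]=0$: $(F\circ G)[U]=\bigsqcup_{\pi}F[\pi]\times\prod_{B\in\pi}G[B]$ over partitions $\pi$ of the $k$-set $U$ into blocks that are nonempty $k$-tuples; multisort substitution $F(G_1,\dots,G_k)$ is defined analogously; all operations extend to virtual species. $X,Y,Z$ denote the singleton species of three different sorts, $\mathcal E$ the species of sets (one structure on every set), $\mathcal E_n$ its restriction to sets of size $n$, $\mathcal E_{\geq m}$ to sizes $\geq m$. Graphs are finite and simple; a leaf is a vertex of degree $1$; two distinct vertices are siblings if they have equal closed neighborhoods $N[v]=\{v\}\cup N(v)$. $\mathcal M$ is the 1-sort species of co-mating graphs: $\mathcal M[U]$ is the set of connected graphs with vertex set $U$ having no siblings. $\mathcal G_{\neq 2}(X,Y,Z)$ is the 3-sort species with $\mathcal G_{\neq 2}[(U_1,U_2,U_3)]$ the set of connected graphs on $U_1\sqcup U_2\sqcup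 U_3$ such that $U_2$ is exactly the set of leaves, $U_3$ exactly the set of vertices having a sibling, and $U_1$ the remaining vertices. Thus $\mathcal G_{\neq2}(X,X+Y,Z)$ has as structures on $(U_1,U_2,U_3)$ the connected graphs on $U_1\sqcup U_2\sqcup U_3$ in which $U_3$ is exactly the set of vertices with siblings, every vertex of $U_2$ is a leaf, and $U_1$ contains all other vertices (leaves may lie in $U_1$ or $U_2$). The species of tufts is $\mathcal T(X,Y)=X\,\mathcal E_{\geq1}(Y)$, and the species of patches is $\mathcal P(X,Y,Z)=\big(1+X+\mathcal E_{\geq 2}(Z)\big)\cdot(\mathcal E\circ\mathcal T)-1$, where $1=\mathcal E_0$. *)

(* 3-sort finite sets are modelled as a finType V together
   with a sort function s : V -> 'I_3 (sort 0 = X, sort 1 = Y, sort 2 = Z).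
   A species is given by a type of "raw" structures on V, a validity predicate
   (depending on the sorts) and a transport map along bijections.  *)
From mathcomp Require Import all_boot.
Set Implicit Arguments.
Unset Strict Implicit.
Unset Printing Implicit Defensive.

Definition isX (V : finType) (s : V -> 'I_3) (v : V) : bool := nat_of_ord (s v) == 0.
Definition isY (V : finType) (s : V -> 'I_3) (v : V) : bool := nat_of_ord (s v) == 1.
Definition isZ (V : finType) (s : V -> 'I_3) (v : V) : bool := nat_of_ord (s v) == 2.

Section Graphs.
Variable T : finType.
Implicit Types (D : {set T}) (E : {set T * T}).

Definition simple_graph_on D E : bool :=
  [forall p in E, [&& p.1 \in D, p.2 \in D, p.1 != p.2 & (p.2, p.1) \in E]].

Definition open_nbh D E (x : T) : {set T} := [set y in D | (x, y) \in E].
Definition closed_nbh D E (x : T) : {set T} := x |: open_nbh D E x.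

Definition connected_on D E : bool :=
  (D != set0) &&
  [forall x in D, forall y in D, connect [rel a b | (a, b) \in E] x y].

Definition is_leaf D E (x : T) : bool := #|open_nbh D E x| == 1.

Definition has_sibling D E (x : T) : bool :=
  [exists y in D, (y != x) && (closed_nbh D E y == closed_nbh D E x)].
End Graphs.

Definition natural_iso3 (L R : finType -> Type)
  (okL : forall V : finType, (V -> 'I_3) -> L V -> bool)
  (okR : forall V : finType, (V -> 'I_3) -> R V -> bool)
  (trL : forall V W : finType, (V -> W) -> L V -> L W)
  (trR : forall V W : finType, (V -> W) -> R V -> R W) : Prop :=
  exists phi : forall V : finType, (V -> 'I_3) -> L V -> R V,
    [/\
        forall (V : finType) (s : V -> 'I_3) (x : L V),
          okL V s x -> okR V s (phi V s x),
        forall (V : finType) (s : V -> 'I_3) (x y : L V),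
          okL V s x -> okL V s y -> phi V s x = phi V s y -> x = y,
        forall (V : finType) (s : V -> 'I_3) (y : R V),
          okR V s y -> exists x, okL V s x /\ phi V s x = y
      &
        forall (V W : finType) (s : V -> 'I_3) (t : W -> 'I_3) (f : V -> W),
          bijective f -> (forall v, t (f v) = s v) ->
          forall x : L V, okL V s x -> phi W t (trL V W f x) = trR V W f (phi V s x)].

(* raw structures: a graph (edge set), or the unique XY-structure,
   or the unique E_2(Z)-structure *)
Definition LHSraw (V : finType) : Type := ({set V * V} + (unit + unit))%type.

(* G_{<>2}(X,X+Y,Z) on (V,s): connected simple graph on V such that the
   sort-Z vertices are exactly the vertices having a sibling, every sort-Y
   vertex is a leaf, and (as in G_{<>2}, where leaves and sibling-vertices are
   disjoint blocks) no leaf has a sibling; the remaining vertices (sort X)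
   are the other vertices, possibly including leaves. *)
Definition G_ne2_XXYZ (V : finType) (s : V -> 'I_3) (g : {set V * V}) : bool :=
  [&& simple_graph_on setT g, connected_on setT g,
      [forall v, has_sibling setT g v == isZ s v],
      [forall v, isY s v ==> is_leaf setT g v]
    & [forall v, ~~ (is_leaf setT g v && has_sibling setT g v)]].

Definition XY_ok (V : finType) (s : V -> 'I_3) : bool :=
  [&& #|[set v | isX s v]| == 1, #|[set v | isY s v]| == 1 & #|[set v | isZ s v]| == 0].

Definition E2Z_ok (V : finType) (s : V -> 'I_3) : bool :=
  [&& #|[set v | isX s v]| == 0, #|[set v | isY s v]| == 0 & #|[set v | isZ s v]| == 2].

Definition LHS_ok (V : finType) (s : V -> 'I_3) (x : LHSraw V) : bool :=
  match x with
  | inl g => G_ne2_XXYZ s g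
  | inr (inl _) => XY_ok s
  | inr (inr _) => E2Z_ok s
  end.

Definition LHS_tr (V W : finType) (f : V -> W) (x : LHSraw V) : LHSraw W :=
  match x with
  | inl g => inl [set (f p.1, f p.2) | p in g]
  | inr u => inr u
  end.

Definition core_ok (V : finType) (s : V -> 'I_3) (c : {set V}) : bool :=
  [|| c == set0,
      (#|c| == 1) && [forall v in c, isX s v]
    | (2 <= #|c|) && [forall v in c, isZ s v]].

Definition tuft_ok (V : finType) (s : V -> 'I_3) (t : {set V}) : bool :=
  [&& #|[set v in t | isX s v]| == 1, 0 < #|[set v in t | isY s v]|
    & [forall v in t, isX s v || isY s v]].

(* patch P = (1 + X + E_{>=2}(Z)) . (E o T) - 1 on the set B: a decomposition
   B = c + (B \ c), a (1+X+E_{>=2}(Z))-structure on c, and a partition of B \ c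
   into tufts; the "- 1" removes the unique structure on the empty set. *)
Definition P_ok (V : finType) (s : V -> 'I_3) (B c : {set V}) (T : {set {set V}}) : bool :=
  [&& B != set0, c \subset B, core_ok s c, partition T (B :\: c)
    & [forall t in T, tuft_ok s t]].

Definition M_ok (T : finType) (D : {set T}) (E : {set T * T}) : bool :=
  [&& simple_graph_on D E, connected_on D E & [forall x in D, ~~ has_sibling D E x]].

(* raw (M o P)-structure: a partition of V into blocks, a graph on the
   blocks, and for each block a patch (pdata B = (core, tufts)). *)
Record MPraw (V : finType) := MPRaw {
  mp_blocks : {set {set V}};
  mp_graph : {set {set V} * {set V}};
  mp_pdata : {ffun {set V} -> {set V} * {set {set V}}} }.

Definition MP_ok (V : finType) (s : V -> 'I_3) (r : MPraw V) : bool :=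
  [&& partition (mp_blocks r) [set: V],
      M_ok (mp_blocks r) (mp_graph r)
    & [forall B : {set V},
         if B \in mp_blocks r then P_ok s B (mp_pdata r B).1 (mp_pdata r B).2
         else mp_pdata r B == (set0, set0)]].

Definition MP_tr (V W : finType) (f : V -> W) (r : MPraw V) : MPraw W :=
  MPRaw ((fun B : {set V} => f @: B) @: mp_blocks r)
        ((fun p : {set V} * {set V} => (f @: p.1, f @: p.2)) @: mp_graph r)
        [ffun B' : {set W} =>
           let p := mp_pdata r (f @^-1: B') in
           (f @: p.1, (fun t : {set V} => f @: t) @: p.2)].

(* Cut a graph of G_{<>2}(X, X+Y, Z) into patches: after deleting the
   Y-leaves, two vertices share a patch when they have the same closed
   neighbourhood, and a Y-leaf joins the patch of its neighbour.  In a patch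
   the vertices without Y-leaves are pairwise twins and form the core (empty,
   one X vertex, or at least two Z vertices), while every vertex carrying
   Y-leaves forms a tuft with them.  Contracting the patches leaves a
   connected graph without siblings, and the graph is recovered from the
   patches by joining two non-Y vertices iff their patches are equal or
   adjacent.  Reading this reconstruction on an arbitrary (M o P)-structure
   always gives a graph of G_{<>2}(X, X+Y, Z), except for the two structures
   on K_2 (an X and a Y vertex, or two Z vertices), where both vertices are
   leaves and siblings: these are the XY and E_2(Z) terms. *)
From mathcomp Require Import all_boot.
Set Implicit Arguments.
Unset Strict Implicit.
Unset Printing Implicit Defensive.

Section Bijections.
Variables (A B : finType) (h : A -> B).
Hypothesis hB : bijective h.

Lemma bij_imset_eq (S : {set A}) (S' : {set B}) :
  (forall a, (h a \in S') = (a \in S)) -> S' = h @: S.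
Proof.
case: hB => h' hK h'K eqS; apply/setP=> b.
by rewrite -[b]h'K mem_imset ?eqS //; exact: can_inj hK.
Qed.

Lemma existsb_bij (P : pred B) : [exists b, P b] = [exists a, P (h a)].
Proof.
case: hB => h' _ h'K; apply/existsP/existsP => [[b Pb]|[a Pa]]; last by exists (h a).
by exists (h' b); rewrite h'K.
Qed.

Lemma imsetT_bij : h @: [set: A] = [set: B].
Proof. by symmetry; apply: bij_imset_eq => a; rewrite !inE. Qed.

Lemma pair_map_bij : bijective (fun p : A * A => (h p.1, h p.2)).
Proof.
case: hB => h' hK h'K; exists (fun p : B * B => (h' p.1, h' p.2)) => -[a b] /=.
  by rewrite !hK.
by rewrite !h'K.
Qed.

End Bijections.

Lemma connect_homo (T T' : finType) (e : rel T) (e' : rel T') (h : T -> T') x y :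
  (forall a b, e a b -> connect e' (h a) (h b)) -> connect e x y -> connect e' (h x) (h y).
Proof.
move=> He /connectP [p]; elim: p x => [|z p IH] x /=; first by move=> _ ->.
by case/andP => exz pz ey; exact: connect_trans (He _ _ exz) (IH _ pz ey).
Qed.

Section Sorts.
Variables (V : finType) (s : V -> 'I_3).

Lemma sort_cases v : [|| isX s v, isY s v | isZ s v].
Proof. by rewrite /isX /isY /isZ; case: (s v) => [[|[|[|n]]] Hn]. Qed.

Lemma isX_notY v : isX s v -> ~~ isY s v.
Proof. by rewrite /isX /isY => /eqP ->. Qed.

Lemma isX_notZ v : isX s v -> ~~ isZ s v.
Proof. by rewrite /isX /isZ => /eqP ->. Qed.

Lemma isZ_notY v : isZ s v -> ~~ isY s v.
Proof. by rewrite /isZ /isY => /eqP ->. Qed.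

Lemma notY_isXZ v : ~~ isY s v -> isX s v || isZ s v.
Proof. by have := sort_cases v; case: (isX s v); case: (isY s v). Qed.

End Sorts.

Section Decompose.
Variables (V : finType) (s : V -> 'I_3) (g : {set V * V}).

Definition inner_cnbh (v : V) : {set V} :=
  [set w | ~~ isY s w && ((w == v) || ((v, w) \in g))].

Definition has_Yleaf (v : V) : bool := [exists w, isY s w && ((v, w) \in g)].

(* A Y-leaf [v] gets the key of its neighbour [x], since [inner_cnbh v = [set x]]. *)
Definition patch_key (v : V) : {set V} :=
  if isY s v then [set w | [exists x in inner_cnbh v, w \in inner_cnbh x]]
  else inner_cnbh v.

Definition patch_of (v : V) : {set V} := [set w in [set: V] | patch_key v == patch_key w].

Definition patches : {set {set V}} := preim_partition patch_key [set: V].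

Definition cross_edges : {set V * V} :=
  [set p in g | [&& ~~ isY s p.1, ~~ isY s p.2 & patch_key p.1 != patch_key p.2]].

Definition patch_graph : {set {set V} * {set V}} :=
  [set (patch_of p.1, patch_of p.2) | p in cross_edges].

Definition patch_core (B : {set V}) : {set V} := [set v in B | ~~ isY s v && ~~ has_Yleaf v].

Definition tuft_at (v : V) : {set V} := v |: [set w | isY s w && ((v, w) \in g)].

Definition patch_tufts (B : {set V}) : {set {set V}} :=
  [set tuft_at v | v in [set v in B | ~~ isY s v && has_Yleaf v]].

Definition decompose : MPraw V :=
  MPRaw patches patch_graph
    [ffun B => if B \in patches then (patch_core B, patch_tufts B) else (set0, set0)].

Lemma patch_key_notY v : ~~ isY s v -> patch_key v = inner_cnbh v.
Proof. by rewrite /patch_key => /negbTE ->. Qed.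

Lemma patch_key_isY v :
  isY s v -> patch_key v = [set w | [exists x in inner_cnbh v, w \in inner_cnbh x]].
Proof. by rewrite /patch_key => ->. Qed.

Lemma patchesE : patches = [set patch_of v | v in [set: V]].
Proof. by []. Qed.

End Decompose.

Section Assemble.
Variables (V : finType) (s : V -> 'I_3) (r : MPraw V).

Definition tuft_of (u : V) : {set V} :=
  pblock (mp_pdata r (pblock (mp_blocks r) u)).2 u.

Definition assemble_adj (u v : V) : bool :=
  [|| [&& ~~ isY s u, ~~ isY s v &
        (pblock (mp_blocks r) u == pblock (mp_blocks r) v) ||
        ((pblock (mp_blocks r) u, pblock (mp_blocks r) v) \in mp_graph r)],
      [&& isY s u, ~~ isY s v & v \in tuft_of u]
    | [&& ~~ isY s u, isY s v & u \in tuft_of v]].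

Definition assemble : {set V * V} := [set p | (p.1 != p.2) && assemble_adj p.1 p.2].

End Assemble.

Definition complete_graph (V : finType) : {set V * V} := [set p | p.1 != p.2].

Definition lhs_graph (V : finType) (x : LHSraw V) : {set V * V} :=
  if x is inl g then g else complete_graph V.

Section Transport.
Variables (V W : finType) (s : V -> 'I_3) (t : W -> 'I_3) (f : V -> W).
Hypotheses (f_bij : bijective f) (f_sort : forall v, t (f v) = s v).
Variable g : {set V * V}.

Local Notation g' := [set (f p.1, f p.2) | p in g].
Let f_inj := bij_inj f_bij.
Let imset_f_inj := imset_inj f_inj.

Let edge_f a b : ((f a, f b) \in g') = ((a, b) \in g).
Proof. exact: (mem_imset g (a, b) (bij_inj (pair_map_bij f_bij))). Qed.

Let isY_f v : isY t (f v) = isY s v.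
Proof. by rewrite /isY f_sort. Qed.

Let inner_cnbh_f v : inner_cnbh t g' (f v) = f @: inner_cnbh s g v.
Proof. by apply: bij_imset_eq => // u; rewrite !inE isY_f edge_f (inj_eq f_inj). Qed.

Let has_Yleaf_f v : has_Yleaf t g' (f v) = has_Yleaf s g v.
Proof.
by rewrite /has_Yleaf (existsb_bij f_bij); apply: eq_existsb => u; rewrite isY_f edge_f.
Qed.

Let patch_key_f v : patch_key t g' (f v) = f @: patch_key s g v.
Proof.
rewrite /patch_key isY_f; case: (isY s v); last exact: inner_cnbh_f.
apply: bij_imset_eq => // u; rewrite !inE (existsb_bij f_bij).
by apply: eq_existsb => x; rewrite !inner_cnbh_f !(mem_imset _ _ f_inj).
Qed.

Let patch_of_f v : patch_of t g' (f v) = f @: patch_of s g v.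
Proof. by apply: bij_imset_eq => // u; rewrite !inE !patch_key_f (inj_eq imset_f_inj). Qed.

Let patches_f : patches t g' = [set f @: B | B : {set V} in patches s g].
Proof.
rewrite !patchesE -(imsetT_bij f_bij) -!imset_comp.
by apply: eq_imset => v /=; rewrite patch_of_f.
Qed.

Let patch_graph_f :
  patch_graph t g' = [set (f @: p.1, f @: p.2) | p : {set V} * {set V} in patch_graph s g].
Proof.
have cross_f : cross_edges t g' = [set (f p.1, f p.2) | p in cross_edges s g].
  apply: (bij_imset_eq (pair_map_bij f_bij)) => -[a b].
  by rewrite !inE /= edge_f !isY_f !patch_key_f (inj_eq imset_f_inj).
rewrite /patch_graph cross_f -!imset_comp; apply: eq_imset => -[a b] /=.
by rewrite !patch_of_f.
Qed.

Let patch_core_f (B : {set V}) : patch_core t g' (f @: B) = f @: patch_core s g B.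
Proof.
apply: bij_imset_eq => // u.
by rewrite !inE (mem_imset _ _ f_inj) isY_f has_Yleaf_f.
Qed.

Let patch_tufts_f (B : {set V}) :
  patch_tufts t g' (f @: B) = [set f @: T | T : {set V} in patch_tufts s g B].
Proof.
have tuft_at_f v : tuft_at t g' (f v) = f @: tuft_at s g v.
  by apply: bij_imset_eq => // u; rewrite !inE (inj_eq f_inj) isY_f edge_f.
have carriers_f : [set v in f @: B | ~~ isY t v && has_Yleaf t g' v] =
                  f @: [set v in B | ~~ isY s v && has_Yleaf s g v].
  by apply: bij_imset_eq => // u; rewrite !inE (mem_imset _ _ f_inj) isY_f has_Yleaf_f.
by rewrite /patch_tufts carriers_f -!imset_comp; apply: eq_imset => v /=.
Qed.

Lemma decompose_transport : decompose t g' = MP_tr f (decompose s g).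
Proof.
rewrite /decompose /MP_tr /=; congr MPRaw; [exact: patches_f | exact: patch_graph_f |].
apply/ffunP => B'; rewrite !ffunE /=.
have eB' : B' = f @: (f @^-1: B').
  by apply/setP => w; case: f_bij => f' _ f'K; rewrite -[w]f'K (mem_imset _ _ f_inj) inE.
rewrite [in LHS]eB' patches_f (mem_imset _ _ imset_f_inj).
by case: ifP => _ /=; rewrite ?imset0 // patch_core_f patch_tufts_f.
Qed.

Lemma lhs_graph_transport (x : LHSraw V) :
  lhs_graph (LHS_tr f x) = [set (f p.1, f p.2) | p in lhs_graph x].
Proof.
case: x => [//|u] /=.
by apply: (bij_imset_eq (pair_map_bij f_bij)) => -[a b]; rewrite !inE /= (inj_eq f_inj).
Qed.

End Transport.

Section LeafyGraph.
Variables (V : finType) (s : V -> 'I_3) (g : {set V * V}).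
Hypothesis g_irr : forall v, (v, v) \notin g.
Hypothesis g_sym : forall v w, ((v, w) \in g) = ((w, v) \in g).
Hypothesis Y_pendant :
  forall y, isY s y -> exists2 x, ~~ isY s x & forall w, ((y, w) \in g) = (w == x).

Local Notation inner_cnbh := (inner_cnbh s g).
Local Notation patch_key := (patch_key s g).
Local Notation patch_of := (patch_of s g).
Local Notation patches := (patches s g).
Local Notation has_Yleaf := (has_Yleaf s g).
Local Notation patch_graph := (patch_graph s g).
Local Notation patch_core := (patch_core s g).
Local Notation tuft_at := (tuft_at s g).
Local Notation patch_tufts := (patch_tufts s g).

Lemma patch_key_Y y x : isY s y -> (y, x) \in g -> patch_key y = inner_cnbh x /\ ~~ isY s x.
Proof.
move=> hy yx; have [x0 hx0 nb] := Y_pendant hy.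
have ex : x = x0 by apply/eqP; rewrite -nb.
subst x0; split=> //.
have cny : inner_cnbh y = [set x].
  apply/setP => w; rewrite !inE nb.
  case: (eqVneq w y) => [->|_] /=.
    by rewrite hy; apply/esym/eqP => eyx; move: hx0; rewrite -eyx hy.
  by case: (eqVneq w x) => [->|]; rewrite ?hx0 ?andbF.
rewrite patch_key_isY //; apply/setP => w; rewrite inE cny.
by apply/exists_inP/idP => [[z /set1P -> //]|wx]; exists x; rewrite ?set11.
Qed.

Lemma patch_key_rep v : exists2 a, ~~ isY s a & patch_key a = patch_key v.
Proof.
case hv: (isY s v); last by exists v; rewrite ?hv.
have [x hx nb] := Y_pendant hv.
have vx : (v, x) \in g by rewrite nb.
have [kv _] := patch_key_Y hv vx.
by exists x; rewrite // patch_key_notY // kv.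
Qed.

Lemma mem_patch_of v w : (w \in patch_of v) = (patch_key v == patch_key w).
Proof. by rewrite !inE. Qed.

Lemma patch_of_self v : v \in patch_of v.
Proof. by rewrite mem_patch_of. Qed.

Lemma eq_patch_of v w : (patch_of v == patch_of w) = (patch_key v == patch_key w).
Proof.
apply/eqP/eqP => [e|e]; last by apply/setP => z; rewrite !mem_patch_of e.
by have := patch_of_self v; rewrite e mem_patch_of => /eqP.
Qed.

Lemma patch_of_patches v : patch_of v \in patches.
Proof. by rewrite patchesE; apply: imset_f. Qed.

Lemma patchesP B : B \in patches -> exists2 a, ~~ isY s a & B = patch_of a.
Proof.
rewrite patchesE => /imsetP [v _ ->]; have [a ha ka] := patch_key_rep v.
by exists a => //; apply/eqP; rewrite eq_patch_of ka.
Qed.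

Lemma partition_patches : partition patches [set: V].
Proof. exact: preim_partitionP. Qed.

Lemma pblock_patches v : pblock patches v = patch_of v.
Proof.
exact: def_pblock (partition_trivIset partition_patches) (patch_of_patches v) (patch_of_self v).
Qed.

Lemma same_key_edge a b :
  ~~ isY s a -> ~~ isY s b -> patch_key a = patch_key b -> a != b -> (a, b) \in g.
Proof.
move=> ha hb k nab; have : b \in inner_cnbh a.
  by rewrite -patch_key_notY // k patch_key_notY // inE hb eqxx.
by rewrite inE hb eq_sym (negbTE nab).
Qed.

Lemma twin_edge a a' b : ~~ isY s a -> ~~ isY s a' -> ~~ isY s b ->
  patch_key a = patch_key a' -> (a, b) \in g -> a' != b -> (a', b) \in g.
Proof.
move=> ha ha' hb k ab nb; have : b \in inner_cnbh a by rewrite inE hb ab orbT.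
by rewrite -!patch_key_notY // k patch_key_notY // inE hb eq_sym (negbTE nb).
Qed.

Lemma patch_graphE a b : ~~ isY s a -> ~~ isY s b ->
  ((patch_of a, patch_of b) \in patch_graph) = ((a, b) \in g) && (patch_key a != patch_key b).
Proof.
move=> ha hb; apply/imsetP/andP => [[[p q]] | [ab kab]]; last first.
  by exists (a, b) => //; rewrite inE /= ab ha hb kab.
rewrite inE /= => /andP [pq /and3P [hp hq kpq]] [/eqP e1 /eqP e2].
move: e1 e2; rewrite !eq_patch_of => /eqP k1 /eqP k2.
have aq : (a, q) \in g.
  apply: (twin_edge hp ha hq); [by rewrite k1 | done |].
  by apply: contraNneq kpq => <-; rewrite k1.
have ba : (b, a) \in g.
  apply: (twin_edge hq hb ha); [by rewrite k2 | by rewrite g_sym |].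
  by apply: contraNneq kpq => eba; rewrite -k1 -k2 eba.
by rewrite g_sym ba /= k1 k2.
Qed.

Lemma trivIset_patch_tufts B : trivIset (patch_tufts B).
Proof.
apply/trivIsetP => A1 A2 /imsetP [v1 H1 ->] /imsetP [v2 H2 ->] ne.
rewrite !inE in H1 H2; case/and3P: H1 => _ h1 _; case/and3P: H2 => _ h2 _.
have nv : v1 != v2 by apply: contraNneq ne => ->.
rewrite -setI_eq0; apply/eqP/setP => w; rewrite !inE.
apply/negbTE/negP => /andP [/orP [/eqP e1|/andP [y1 e1]] /orP [/eqP e2|/andP [y2 e2]]].
- by rewrite -e1 -e2 eqxx in nv.
- by rewrite -e1 y2 in h1.
- by rewrite -e2 y1 in h2.
have [x _ nb] := Y_pendant y1.
by move: e1 e2 nv; rewrite !(g_sym _ w) !nb => /eqP -> /eqP ->; rewrite eqxx.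
Qed.

Lemma pblock_patch_tufts_Y y w : isY s y -> ~~ isY s w ->
  (w \in pblock (patch_tufts (patch_of y)) y) = ((y, w) \in g).
Proof.
move=> hy hw; have [x hx nb] := Y_pendant hy.
have yx : (y, x) \in g by rewrite nb.
have [kx _] := patch_key_Y hy yx.
have -> : pblock (patch_tufts (patch_of y)) y = tuft_at x.
  apply: def_pblock; first exact: trivIset_patch_tufts.
    apply: imset_f; rewrite !inE kx patch_key_notY // eqxx hx /=.
    by apply/existsP; exists y; rewrite hy g_sym yx.
  by rewrite !inE hy g_sym yx orbT.
by rewrite !inE nb (negbTE hw) orbF.
Qed.

Lemma assemble_decompose : assemble s (decompose s g) = g.
Proof.
apply/setP => -[u v]; rewrite inE /= /assemble_adj /tuft_of /=.
case: (eqVneq u v) => [<-|nuv] /=; first by rewrite (negbTE (g_irr u)).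
rewrite !pblock_patches !ffunE !patch_of_patches /=.
case hu: (isY s u); case hv: (isY s v) => /=.
- have [x hx nb] := Y_pendant hu.
  by rewrite nb; apply/esym/eqP => vx; move: hx; rewrite -vx hv.
- by rewrite orbF pblock_patch_tufts_Y ?hv.
- by rewrite pblock_patch_tufts_Y ?hu ?hv // g_sym.
- rewrite patch_graphE ?hu ?hv // eq_patch_of.
  case: (eqVneq (patch_key u) (patch_key v)) => k /=; last by rewrite andbT orbF.
  by rewrite same_key_edge ?hu ?hv.
Qed.

Section Decomposable.
Hypothesis g_connected : connected_on [set: V] g.
Hypothesis Yleaf_carrier_X : forall v, ~~ isY s v -> has_Yleaf v -> isX s v.
Hypothesis core_twin_Z : forall v, ~~ isY s v -> ~~ has_Yleaf v ->
  isZ s v = [exists w, [&& w != v, ~~ isY s w, ~~ has_Yleaf w & inner_cnbh w == inner_cnbh v]].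

Lemma patch_graph_simple : simple_graph_on patches patch_graph.
Proof.
apply/forall_inP => -[B1 B2] /imsetP [[a b]].
rewrite inE /= => /andP [ab /and3P [ha hb kab]] [-> ->] /=.
by rewrite !patch_of_patches eq_patch_of kab patch_graphE // g_sym ab eq_sym kab.
Qed.

Lemma connect_patch_of u v : (u, v) \in g ->
  connect [rel B1 B2 | (B1, B2) \in patch_graph] (patch_of u) (patch_of v).
Proof.
move=> uv; case hu: (isY s u).
  have [k hv] := patch_key_Y hu uv.
  by have /eqP -> : patch_of u == patch_of v by rewrite eq_patch_of k patch_key_notY.
case hv: (isY s v).
  rewrite g_sym in uv; have [k _] := patch_key_Y hv uv.
  by have /eqP -> : patch_of u == patch_of v by rewrite eq_patch_of k patch_key_notY ?hu.
case: (eqVneq (patch_key u) (patch_key v)) => k.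
  by have /eqP -> : patch_of u == patch_of v by rewrite eq_patch_of k.
by apply: connect1; rewrite /= patch_graphE ?hu ?hv // uv k.
Qed.

Lemma patch_graph_connected : connected_on patches patch_graph.
Proof.
case/andP: g_connected => /set0Pn [v _] cg; apply/andP; split.
  by apply/set0Pn; exists (patch_of v); exact: patch_of_patches.
apply/forall_inP => _ /patchesP [a _ ->]; apply/forall_inP => _ /patchesP [b _ ->].
apply: connect_homo connect_patch_of _.
exact: forall_inP (forall_inP cg a (in_setT a)) b (in_setT b).
Qed.

Lemma closed_nbh_patch_graph a w : ~~ isY s a -> ~~ isY s w ->
  (patch_of w \in closed_nbh patches patch_graph (patch_of a)) = (w \in inner_cnbh a).
Proof.
move=> ha hw; rewrite !inE patch_of_patches /= patch_graphE // eq_patch_of hw /=.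
case: (eqVneq (patch_key w) (patch_key a)) => k /=.
  case: (eqVneq w a) => //= nwa; symmetry; apply: same_key_edge => //.
  by rewrite eq_sym.
by rewrite andbT; case: (eqVneq w a) => // e; rewrite e eqxx in k.
Qed.

Lemma patch_graph_no_sibling : [forall B in patches, ~~ has_sibling patches patch_graph B].
Proof.
apply/forall_inP => _ /patchesP [a ha ->].
apply/exists_inP => -[_ /patchesP [b hb ->] /andP [nab /eqP ecn]].
suff ecb : inner_cnbh b = inner_cnbh a by rewrite eq_patch_of !patch_key_notY // ecb eqxx in nab.
apply/setP => w; case hw: (isY s w); first by rewrite !inE hw.
by rewrite -(closed_nbh_patch_graph hb) ?hw // -(closed_nbh_patch_graph ha) ?hw // ecn.
Qed.

Section Patch.
Variable a : V.
Local Notation B := (patch_of a).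

Lemma mem_patch_core v :
  (v \in patch_core B) = [&& patch_key a == patch_key v, ~~ isY s v & ~~ has_Yleaf v].
Proof. by rewrite !inE. Qed.

Lemma isZ_core_twin v w : v \in patch_core B -> w \in patch_core B -> w != v -> isZ s v.
Proof.
rewrite !mem_patch_core => /and3P [kv hv nhv] /and3P [kw hw nhw] nwv.
rewrite core_twin_Z //; apply/existsP; exists w; rewrite nwv hw nhw /=.
by rewrite -!patch_key_notY // -(eqP kv) -(eqP kw).
Qed.

Lemma core_twin_of_isZ v : v \in patch_core B -> isZ s v -> exists2 w, w \in patch_core B & w != v.
Proof.
rewrite mem_patch_core => /and3P [kv hv nh]; rewrite core_twin_Z //.
case/existsP => w /and4P [nwv hw nhw /eqP cw]; exists w => //.
by rewrite mem_patch_core hw nhw (eqP kv) !patch_key_notY // cw eqxx.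
Qed.

Lemma core_ok_patch_core : core_ok s (patch_core B).
Proof.
rewrite /core_ok; case E: #|patch_core B| => [|[|n]].
- by rewrite (cards0_eq E) eqxx.
- move/eqP/cards1P: E => [v ev]; apply/or3P; apply: Or32; apply/andP; split => //.
  have vc : v \in patch_core B by rewrite ev set11.
  have hv : ~~ isY s v by move: vc; rewrite mem_patch_core => /and3P [].
  rewrite ev; apply/forall_inP => _ /set1P ->.
  case/orP: (notY_isXZ hv) => // /(core_twin_of_isZ vc) [w].
  by rewrite ev => /set1P ->; rewrite eqxx.
- apply/or3P; apply: Or33; apply/andP; split => //; apply/forall_inP => v vc.
  have : 0 < #|patch_core B :\ v| by move: E; rewrite (cardsD1 v) vc add1n => -[->].
  by case/card_gt0P => w /setD1P [nwv wc]; apply: isZ_core_twin nwv.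
Qed.

Lemma cover_patch_tufts : cover (patch_tufts B) = B :\: patch_core B.
Proof.
apply/setP => w; apply/bigcupP/idP => [[t /imsetP [v Hv ->] wt]|].
  move: Hv; rewrite !inE /= => /and3P [kv hv hyv].
  move: wt; rewrite !inE => /orP [/eqP ->|/andP [yw vw]]; first by rewrite kv hv hyv.
  rewrite g_sym in vw; have [kw _] := patch_key_Y yw vw.
  by rewrite yw /= andbF /= kw -patch_key_notY // kv.
rewrite !inE /= => /andP [nc kw].
case hw: (isY s w).
  have [x hx nb] := Y_pendant hw.
  have wx : (w, x) \in g by rewrite nb.
  have [kwx _] := patch_key_Y hw wx.
  exists (tuft_at x); last by rewrite !inE hw g_sym wx orbT.
  apply: imset_f; rewrite !inE hx /= [patch_key x]patch_key_notY // -kwx kw /=.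
  by apply/existsP; exists w; rewrite hw g_sym wx.
exists (tuft_at w); last by rewrite !inE eqxx.
apply: imset_f; rewrite !inE kw hw /=.
by move: nc; rewrite kw hw /= negbK.
Qed.

Lemma partition_patch_tufts : partition (patch_tufts B) (B :\: patch_core B).
Proof.
apply/and3P; split; [by rewrite cover_patch_tufts | exact: trivIset_patch_tufts |].
by apply/imsetP => -[v _ /setP /(_ v)]; rewrite !inE eqxx.
Qed.

Lemma tuft_ok_patch_tufts : [forall t in patch_tufts B, tuft_ok s t].
Proof.
apply/forall_inP => _ /imsetP [v Hv ->].
move: Hv; rewrite !inE => /and3P [_ hv hyv]; have xv := Yleaf_carrier_X hv hyv.
apply/and3P; split.
- apply/cards1P; exists v; apply/setP => w; rewrite !inE.
  case: (eqVneq w v) => [->|nwv] /=; first by rewrite xv.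
  by apply/negbTE/andP => -[/andP [yw _] /isX_notY]; rewrite yw.
- case/existsP: hyv => y /andP [hy vy]; apply/card_gt0P; exists y.
  by rewrite !inE hy vy orbT.
- apply/forall_inP => w; rewrite !inE => /orP [/eqP ->|/andP [-> _]].
    by rewrite xv.
  by rewrite orbT.
Qed.

Lemma P_ok_patch : P_ok s B (patch_core B) (patch_tufts B).
Proof.
apply/and5P; split; [|by apply/subsetP => v /setIdP [] | exact: core_ok_patch_core
  | exact: partition_patch_tufts | exact: tuft_ok_patch_tufts].
by apply/set0Pn; exists a; exact: patch_of_self.
Qed.

End Patch.

Lemma decompose_ok : MP_ok s (decompose s g).
Proof.
apply/and3P; split => /=; first exact: partition_patches.
  by apply/and3P; split; [exact: patch_graph_simple | exact: patch_graph_connected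
    | exact: patch_graph_no_sibling].
apply/forallP => B; rewrite ffunE; case: ifP => HB /=; rewrite HB //=.
by have [a _ ->] := patchesP HB; exact: P_ok_patch.
Qed.

End Decomposable.

End LeafyGraph.

Section SpanningGraph.
Variables (V : finType) (g : {set V * V}).
Local Notation N v := (closed_nbh [set: V] g v).

Lemma mem_closed_nbhT v w : (w \in N v) = (w == v) || ((v, w) \in g).
Proof. by rewrite !inE. Qed.

Lemma is_leaf_nbr y : is_leaf [set: V] g y -> exists x, forall w, ((y, w) \in g) = (w == x).
Proof. by move/cards1P => [x /setP ex]; exists x => w; move: (ex w); rewrite !inE. Qed.

Lemma has_siblingI v w : w != v -> N w = N v -> has_sibling [set: V] g v.
Proof. by move=> nwv e; apply/existsP; exists w; rewrite in_setT nwv e eqxx. Qed.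

Lemma mem_inner_cnbh (s : V -> 'I_3) v w :
  (w \in inner_cnbh s g v) = ~~ isY s w && (w \in N v).
Proof. by rewrite !inE. Qed.

End SpanningGraph.

Section GneTwo.
Variables (V : finType) (s : V -> 'I_3) (g : {set V * V}).
Hypothesis gG : G_ne2_XXYZ s g.
Local Notation N v := (closed_nbh [set: V] g v).

Let g_simple : simple_graph_on [set: V] g. Proof. by case/and5P: gG. Qed.
Let has_sibling_isZ v : has_sibling [set: V] g v = isZ s v.
Proof. by case/and5P: gG => _ _ /forallP /(_ v) /eqP. Qed.
Let isY_leaf v : isY s v -> is_leaf [set: V] g v.
Proof. by case/and5P: gG => _ _ _ /forallP /(_ v) /implyP. Qed.
Let leaf_no_sibling v : is_leaf [set: V] g v -> has_sibling [set: V] g v -> False.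
Proof. by move=> l sb; case/and5P: gG => _ _ _ _ /forallP /(_ v); rewrite l sb. Qed.

Lemma Gne2_irr v : (v, v) \notin g.
Proof. by apply/negP => /(forall_inP g_simple) /and4P [_ _ /=]; rewrite eqxx. Qed.

Lemma Gne2_sym v w : ((v, w) \in g) = ((w, v) \in g).
Proof. by apply/idP/idP => /(forall_inP g_simple) /and4P []. Qed.

(* If the neighbour of a Y-leaf were a leaf too, the two would be siblings. *)
Lemma Gne2_Y_pendant y :
  isY s y -> exists2 x, ~~ isY s x & forall w, ((y, w) \in g) = (w == x).
Proof.
move=> hy; have [x nb] := is_leaf_nbr (isY_leaf hy); exists x => //.
apply/negP => hx; have [x' nb'] := is_leaf_nbr (isY_leaf hx).
have yx : (y, x) \in g by rewrite nb.
have ex' : x' = y by apply/esym/eqP; rewrite -nb' Gne2_sym.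
subst x'.
have nxy : x != y by apply: contraTneq yx => ->; exact: Gne2_irr.
apply: (leaf_no_sibling (isY_leaf hy)); apply: (has_siblingI nxy); apply/setP => w.
by rewrite !mem_closed_nbhT nb nb' orbC.
Qed.

(* A Z vertex has a sibling, and a vertex carrying a Y-leaf cannot have one:
   the sibling would be the leaf itself or a second neighbour of the leaf. *)
Lemma Gne2_Yleaf_carrier_X v : ~~ isY s v -> has_Yleaf s g v -> isX s v.
Proof.
move=> hv /existsP [y /andP [hy vy]].
case/orP: (notY_isXZ hv) => //; rewrite -has_sibling_isZ.
case/existsP => w /and3P [_ nwv /eqP e].
have : y \in N w by rewrite e mem_closed_nbhT vy orbT.
rewrite mem_closed_nbhT => /orP [/eqP ew|wy].
  subst w; case: (leaf_no_sibling (isY_leaf hy)); apply: (has_siblingI _ (esym e)).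
  by apply: contraNneq hv => ->.
have [x _ nb] := Gne2_Y_pendant hy.
by move: wy vy nwv; rewrite !(Gne2_sym _ y) !nb => /eqP -> /eqP ->; rewrite eqxx.
Qed.

Lemma Gne2_core_twin_Z v : ~~ isY s v -> ~~ has_Yleaf s g v ->
  isZ s v = [exists w, [&& w != v, ~~ isY s w, ~~ has_Yleaf s g w &
                          inner_cnbh s g w == inner_cnbh s g v]].
Proof.
move=> hv nhv; rewrite -has_sibling_isZ; apply/existsP/existsP.
  move=> [w /and3P [_ nwv /eqP e]]; exists w; rewrite nwv /=.
  have hw : ~~ isY s w.
    apply/negP => yw; apply: (leaf_no_sibling (isY_leaf yw)).
    by apply: (has_siblingI _ (esym e)); rewrite eq_sym.
  rewrite hw /=; apply/andP; split.
    apply/existsP => -[y /andP [hy wy]]; move/negP: nhv; apply.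
    have : y \in N v by rewrite -e mem_closed_nbhT wy orbT.
    rewrite mem_closed_nbhT => /orP [/eqP eyv|vy]; first by rewrite -eyv hy in hv.
    by apply/existsP; exists y; rewrite hy vy.
  by apply/eqP/setP => z; rewrite !mem_inner_cnbh e.
move=> [w /and4P [nwv hw nhw /eqP e]]; exists w; rewrite in_setT nwv /=.
apply/eqP/setP => z; case hz: (isY s z); last first.
  by move/setP: e => /(_ z); rewrite !mem_inner_cnbh hz.
have no_Yleaf u : ~~ isY s u -> ~~ has_Yleaf s g u -> (z \in N u) = false.
  move=> hu nhu; rewrite mem_closed_nbhT; apply/negbTE; rewrite negb_or.
  rewrite (contraTneq _ hz) => [|-> //]; apply: contra nhu => uz.
  by apply/existsP; exists z; rewrite hz.
by rewrite !no_Yleaf.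
Qed.

End GneTwo.

Section TwoVertices.
Variables (V : finType) (s : V -> 'I_3).
Local Notation K := (complete_graph V).

Lemma XY_ok_vertices : XY_ok s -> exists x y,
  [/\ isX s x, isY s y, x != y & forall v, v = x \/ v = y].
Proof.
case/and3P => /cards1P [x /setP ex] /cards1P [y /setP ey] /eqP /cards0_eq /setP ez.
have hx : isX s x by move: (ex x); rewrite !inE eqxx.
have hy : isY s y by move: (ey y); rewrite !inE eqxx.
exists x, y; split => //; first by apply: contraTneq hy => <-; exact: isX_notY.
move=> v; move: (ex v) (ey v) (ez v) (sort_cases s v); rewrite !inE.
case: (isX s v) => [/esym/eqP -> _ _ _|_]; first by left.
case: (isY s v) => [/esym/eqP -> _ _|_]; first by right.
by case: (isZ s v).
Qed.

Lemma E2Z_ok_vertices : E2Z_ok s -> exists a b : V,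
  [/\ a != b, forall v, v = a \/ v = b & forall v, isZ s v].
Proof.
case/and3P => /eqP /cards0_eq /setP ex /eqP /cards0_eq /setP ey /cards2P [a [b [nab /setP ez]]].
have aZ v : isZ s v by move: (ex v) (ey v) (sort_cases s v); rewrite !inE => -> ->.
exists a, b; split => // v; move: (ez v); rewrite !inE aZ.
by move=> /esym/orP [/eqP|/eqP]; [left | right].
Qed.

Lemma XY_okI x y : isX s x -> isY s y -> (forall v, v = x \/ v = y) -> XY_ok s.
Proof.
move=> hx hy xy; have nxy : x != y by apply: contraTneq hy => <-; exact: isX_notY.
apply/and3P; split;
  [apply/cards1P; exists x | apply/cards1P; exists y | rewrite cards_eq0; apply/eqP];
  apply/setP => v; rewrite !inE; case: (xy v) => ->; rewrite ?eqxx ?hx ?hy //.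
- by rewrite eq_sym (negbTE nxy); apply/negbTE; apply: contraL hy; exact: isX_notY.
- by rewrite (negbTE nxy); apply/negbTE; exact: isX_notY.
- by apply/negbTE; exact: isX_notZ.
- by apply/negbTE; apply: contraL hy; exact: isZ_notY.
Qed.

Lemma E2Z_okI a b : (forall v, v = a \/ v = b) -> isZ s a -> isZ s b -> a != b -> E2Z_ok s.
Proof.
move=> ab za zb nab; have aZ v : isZ s v by case: (ab v) => ->.
apply/and3P; split; [rewrite cards_eq0; apply/eqP | rewrite cards_eq0; apply/eqP
  | apply/cards2P; exists a, b; split => //]; apply/setP => v; rewrite !inE.
- by apply/negbTE/negP => /isX_notZ; rewrite aZ.
- by apply/negbTE; exact: isZ_notY.
- by rewrite aZ; case: (ab v) => ->; rewrite eqxx ?orbT.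
Qed.

Lemma complete_graph_irr v : (v, v) \notin K.
Proof. by rewrite inE /= eqxx. Qed.

Lemma complete_graph_sym v w : ((v, w) \in K) = ((w, v) \in K).
Proof. by rewrite !inE eq_sym. Qed.

Lemma complete_graph_connected (v : V) : connected_on [set: V] K.
Proof.
apply/andP; split; first by apply/set0Pn; exists v.
apply/forall_inP => a _; apply/forall_inP => b _.
by case: (eqVneq a b) => [->|nab]; [exact: connect0 | apply: connect1; rewrite /= inE].
Qed.

Section XY.
Variables x y : V.
Hypotheses (hx : isX s x) (hy : isY s y) (nxy : x != y) (xy : forall v, v = x \/ v = y).

Lemma XY_Y_pendant v : isY s v -> exists2 u, ~~ isY s u & forall w, ((v, w) \in K) = (w == u).
Proof.
move=> hv; exists x; first exact: isX_notY.
have -> : v = y by case: (xy v) hv => // ->; rewrite (negbTE (isX_notY hx)).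
by move=> w; rewrite inE /=; case: (xy w) => ->; rewrite ?eqxx // eq_sym ?nxy // (negbTE nxy).
Qed.

Lemma XY_decompose_ok : MP_ok s (decompose s K).
Proof.
apply: decompose_ok complete_graph_sym XY_Y_pendant (complete_graph_connected x) _ _.
  by move=> v hv _; case: (xy v) hv => ->; rewrite ?hx ?hy.
move=> v hv; case: (xy v) => ev; last by rewrite ev hy in hv.
by case/negP; apply/existsP; exists y; rewrite hy inE /= ev.
Qed.

End XY.

Lemma E2Z_decompose_ok (a b : V) : a != b -> (forall v, v = a \/ v = b) -> (forall v, isZ s v) ->
  MP_ok s (decompose s K).
Proof.
move=> nab ab aZ; have nY v : ~~ isY s v by exact: isZ_notY.
have nhY v : ~~ has_Yleaf s K v by apply/existsP => -[w /andP [hw _]]; move: (nY w); rewrite hw.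
have cnT v : inner_cnbh s K v = [set: V].
  by apply/setP => z; rewrite !inE /= nY eq_sym orbN.
apply: decompose_ok complete_graph_sym _ (complete_graph_connected a) _ _.
- by move=> v hv; move: (nY v); rewrite hv.
- by move=> v _; rewrite (negbTE (nhY v)).
move=> v _ _; rewrite aZ; symmetry; apply/existsP.
exists (if v == a then b else a); rewrite nY nhY !cnT eqxx !andbT.
by case: (eqVneq v a) => [->|]; rewrite // eq_sym.
Qed.

(* In K_2 both vertices are leaves and siblings of each other. *)
Lemma complete_graph_not_Gne2 : XY_ok s || E2Z_ok s -> ~~ G_ne2_XXYZ s K.
Proof.
move=> two; have [a [b [nab ab]]] : exists a b : V, a != b /\ forall v, v = a \/ v = b.
  by case/orP: two => [/XY_ok_vertices [x [y [_ _ nxy xy]]] | /E2Z_ok_vertices [a [b [nab ab _]]]];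
    [exists x, y | exists a, b].
apply/negP => /and5P [_ _ _ _ /forallP /(_ a)]; apply/negP; rewrite negbK.
apply/andP; split.
  apply/cards1P; exists b; apply/setP => w; rewrite !inE /=.
  by case: (ab w) => ->; rewrite ?eqxx // (negbTE nab).
apply: (has_siblingI (w := b)); first by rewrite eq_sym.
apply/setP => w; rewrite !mem_closed_nbhT !inE /=.
by case: (ab w) => ->; rewrite ?eqxx ?orbT //= ?(eq_sym b a) nab ?orbT.
Qed.

Lemma XY_ok_not_E2Z : XY_ok s -> ~~ E2Z_ok s.
Proof. by case/and3P => /eqP hX _ _; apply/negP => /and3P [/eqP hX' _ _]; rewrite hX in hX'. Qed.

Lemma two_vertex_complete (g : {set V * V}) x y :
  (forall v, (v, v) \notin g) -> (forall v w, ((v, w) \in g) = ((w, v) \in g)) ->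
  (forall v, v = x \/ v = y) -> (x, y) \in g -> g = complete_graph V.
Proof.
move=> g_irr g_sym xy gxy; have nxy : x != y by apply: contraTneq gxy => ->.
apply/setP => -[a b]; rewrite [RHS]inE /=.
case: (xy a) => ->; case: (xy b) => ->; rewrite ?eqxx ?(negbTE (g_irr _)) //.
  by rewrite gxy.
by rewrite g_sym gxy eq_sym.
Qed.

End TwoVertices.

Section Tufts.
Variables (V : finType) (s : V -> 'I_3) (t : {set V}).
Hypothesis t_ok : tuft_ok s t.

Lemma tuft_ok_isXY w : w \in t -> isX s w || isY s w.
Proof. by case/and3P: t_ok => _ _ /forall_inP; apply. Qed.

Lemma tuft_ok_X : exists2 c, c \in t & isX s c.
Proof.
by case/and3P: t_ok => /cards1P [c /setP /(_ c)]; rewrite !inE eqxx => /andP []; exists c.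
Qed.

Lemma tuft_ok_Y : exists2 y, y \in t & isY s y.
Proof. by case/and3P: t_ok => _ /card_gt0P [y]; rewrite inE => /andP []; exists y. Qed.

Lemma tuft_ok_notY_eq w1 w2 :
  w1 \in t -> w2 \in t -> ~~ isY s w1 -> ~~ isY s w2 -> w1 = w2.
Proof.
case/and3P: t_ok => /cards1P [c /setP ec] _ _.
have to_c w : w \in t -> ~~ isY s w -> w = c.
  move=> wt hw; have := ec w; rewrite !inE wt.
  case/orP: (tuft_ok_isXY wt) => [-> /esym/eqP // | yw]; by rewrite yw in hw.
by move=> w1t w2t h1 h2; rewrite (to_c _ w1t h1) (to_c _ w2t h2).
Qed.

End Tufts.

Section Assembled.
Variables (V : finType) (s : V -> 'I_3) (r : MPraw V).
Hypothesis r_ok : MP_ok s r.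

Local Notation P := (mp_blocks r).
Local Notation E := (mp_graph r).
Local Notation pb := (pblock P).
Local Notation core B := (mp_pdata r B).1.
Local Notation tufts B := (mp_pdata r B).2.
Local Notation tuft_of := (tuft_of r).
Local Notation g := (assemble s r).

Let P_partition : partition P [set: V]. Proof. by case/and3P: r_ok. Qed.
Let E_comating : M_ok P E. Proof. by case/and3P: r_ok. Qed.
Let E_simple : simple_graph_on P E. Proof. by case/and3P: E_comating. Qed.
Let E_connected : connected_on P E. Proof. by case/and3P: E_comating. Qed.
Let E_no_sibling : [forall B in P, ~~ has_sibling P E B]. Proof. by case/and3P: E_comating. Qed.
Let patch_ok B : B \in P -> P_ok s B (core B) (tufts B).
Proof. by case/and3P: r_ok => _ _ /forallP /(_ B); case: ifP. Qed.

Lemma pblock_in u : pb u \in P.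
Proof. by rewrite pblock_mem // (cover_partition P_partition). Qed.

Lemma mem_pblock_self u : u \in pb u.
Proof. by rewrite mem_pblock (cover_partition P_partition). Qed.

Lemma pblock_eq B u : B \in P -> u \in B -> pb u = B.
Proof. exact: def_pblock (partition_trivIset P_partition). Qed.

Lemma mp_graph_edge B1 B2 :
  (B1, B2) \in E -> [&& B1 \in P, B2 \in P, B1 != B2 & (B2, B1) \in E].
Proof. exact: (forall_inP E_simple). Qed.

Section InPatch.
Variable B : {set V}.
Hypothesis BP : B \in P.

Lemma patch_neq0 : B != set0. Proof. by case/and5P: (patch_ok BP). Qed.
Lemma core_sub : core B \subset B. Proof. by case/and5P: (patch_ok BP). Qed.
Lemma core_ok_core : core_ok s (core B). Proof. by case/and5P: (patch_ok BP). Qed.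
Lemma partition_tufts : partition (tufts B) (B :\: core B).
Proof. by case/and5P: (patch_ok BP). Qed.
Lemma tuft_ok_tufts t : t \in tufts B -> tuft_ok s t.
Proof. by case/and5P: (patch_ok BP) => _ _ _ _ /forall_inP; apply. Qed.

Lemma core_notY v : v \in core B -> ~~ isY s v.
Proof.
case/or3P: core_ok_core => [/eqP ->|/andP [_ /forall_inP al]|/andP [_ /forall_inP al]].
- by rewrite inE.
- by move/al/isX_notY.
- by move/al/isZ_notY.
Qed.

Lemma tufts_sub t : t \in tufts B -> t \subset B :\: core B.
Proof. by move=> tB; rewrite -(cover_partition partition_tufts); exact: bigcup_sup. Qed.

End InPatch.

Lemma tuft_of_eq u t : t \in tufts (pb u) -> u \in t -> tuft_of u = t.
Proof. exact: def_pblock (partition_trivIset (partition_tufts (pblock_in u))). Qed.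

Lemma tuft_of_noncore u : u \notin core (pb u) -> tuft_of u \in tufts (pb u) /\ u \in tuft_of u.
Proof.
move=> nc; have uc : u \in cover (tufts (pb u)).
  by rewrite (cover_partition (partition_tufts (pblock_in u))) !inE nc mem_pblock_self.
by split; [exact: pblock_mem | rewrite mem_pblock].
Qed.

Lemma isY_noncore u : isY s u -> u \notin core (pb u).
Proof. by move=> hu; apply: contraL hu => uc; exact: (core_notY (pblock_in u) uc). Qed.

Lemma tuft_ok_tuft_of u : u \notin core (pb u) -> tuft_ok s (tuft_of u).
Proof. by move=> /tuft_of_noncore [tP _]; apply: tuft_ok_tufts tP; exact: pblock_in. Qed.

Lemma mem_tuft_of u w : u \notin core (pb u) -> w \in tuft_of u ->
  [/\ pb w = pb u, w \notin core (pb w) & tuft_of w = tuft_of u].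
Proof.
move=> nc wt; have [tP ut] := tuft_of_noncore nc.
have /setDP [wB nwc] := subsetP (tufts_sub (pblock_in u) tP) w wt.
have e : pb w = pb u by exact: pblock_eq (pblock_in u) wB.
by split; rewrite ?e //; apply: tuft_of_eq; rewrite ?e.
Qed.

Lemma patch_notY B : B \in P -> exists2 w, w \in B & ~~ isY s w.
Proof.
move=> BP; case/set0Pn: (patch_neq0 BP) => u uB; have eu := pblock_eq BP uB.
have [uc|nc] := boolP (u \in core (pb u)).
  by exists u; rewrite // (core_notY (pblock_in u) uc).
have [c ct xc] := tuft_ok_X (tuft_ok_tuft_of nc).
exists c; last exact: isX_notY.
by have [e _ _] := mem_tuft_of nc ct; rewrite -eu -e mem_pblock_self.
Qed.

Lemma assemble_NN u v : ~~ isY s u -> ~~ isY s v ->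
  ((u, v) \in g) = (u != v) && ((pb u == pb v) || ((pb u, pb v) \in E)).
Proof. by move=> hu hv; rewrite inE /assemble_adj /= (negbTE hu) (negbTE hv) /= !orbF. Qed.

Lemma assemble_YN u v : isY s u -> ~~ isY s v -> ((u, v) \in g) = (v \in tuft_of u).
Proof.
move=> hu hv; rewrite inE /assemble_adj /= hu (negbTE hv) /= orbF.
by rewrite (_ : u != v) //; apply: contraTneq hu => ->.
Qed.

Lemma assemble_NY u v : ~~ isY s u -> isY s v -> ((u, v) \in g) = (u \in tuft_of v).
Proof.
move=> hu hv; rewrite inE /assemble_adj /= hv (negbTE hu) /=.
by rewrite (_ : u != v) //; apply: contraNneq hu => ->.
Qed.

Lemma assemble_YY u v : isY s u -> isY s v -> ((u, v) \in g) = false.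
Proof. by move=> hu hv; rewrite inE /assemble_adj /= hu hv /= andbF. Qed.

Lemma assemble_irr u : (u, u) \notin g.
Proof. by rewrite inE eqxx. Qed.

Lemma assemble_sym u v : ((u, v) \in g) = ((v, u) \in g).
Proof.
case hu: (isY s u); case hv: (isY s v).
- by rewrite !assemble_YY.
- by rewrite assemble_YN ?hv // assemble_NY ?hv.
- by rewrite assemble_NY ?hu // assemble_YN ?hu.
have E_sym B1 B2 : ((B1, B2) \in E) = ((B2, B1) \in E).
  by apply/idP/idP => /mp_graph_edge /and4P [].
by rewrite !assemble_NN ?hu ?hv // eq_sym (eq_sym (pb u)) E_sym.
Qed.

Lemma assemble_Y_nbr u : isY s u -> exists c,
  [/\ c \in tuft_of u, isX s c & forall w, ((u, w) \in g) = (w == c)].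
Proof.
move=> hu; have nc := isY_noncore hu; have [c ct xc] := tuft_ok_X (tuft_ok_tuft_of nc).
exists c; split => // w; case hw: (isY s w).
  by rewrite assemble_YY //; apply/esym/negbTE; apply: contraTneq hw => ->; exact: isX_notY.
rewrite assemble_YN ?hw //; apply/idP/eqP => [wt|->] //.
by apply: (tuft_ok_notY_eq (tuft_ok_tuft_of nc)) wt ct _ _; rewrite ?hw ?isX_notY.
Qed.

Lemma assemble_Y_pendant y :
  isY s y -> exists2 x, ~~ isY s x & forall w, ((y, w) \in g) = (w == x).
Proof. by move/assemble_Y_nbr => [c [_ xc nb]]; exists c; rewrite ?isX_notY. Qed.

Lemma has_Yleaf_assemble v : ~~ isY s v -> has_Yleaf s g v = (v \notin core (pb v)).
Proof.
move=> hv; apply/existsP/idP => [[y /andP [hy vy]]|nc].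
  by rewrite assemble_NY // in vy; case: (mem_tuft_of (isY_noncore hy) vy).
have [y yt hy] := tuft_ok_Y (tuft_ok_tuft_of nc); have [_ _ ety] := mem_tuft_of nc yt.
by exists y; rewrite hy assemble_NY // ety; case: (tuft_of_noncore nc).
Qed.

Definition lifted_cnbh (B : {set V}) : {set V} :=
  [set w | ~~ isY s w && (pb w \in closed_nbh P E B)].

Lemma inner_cnbh_assemble u : ~~ isY s u -> inner_cnbh s g u = lifted_cnbh (pb u).
Proof.
move=> hu; apply/setP => w; rewrite mem_inner_cnbh mem_closed_nbhT [in RHS]inE.
case hw: (isY s w) => //=; rewrite assemble_NN ?hw // !inE pblock_in /=.
by case: (eqVneq w u) => [->|nwu] /=; rewrite ?eqxx // eq_sym.
Qed.

Lemma patch_key_assemble u : patch_key s g u = lifted_cnbh (pb u).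
Proof.
case hu: (isY s u); last by rewrite patch_key_notY ?hu // inner_cnbh_assemble ?hu.
have [c [ct xc nb]] := assemble_Y_nbr hu.
have uc : (u, c) \in g by rewrite nb.
have [-> _] := patch_key_Y assemble_Y_pendant hu uc.
by rewrite inner_cnbh_assemble ?isX_notY //; case: (mem_tuft_of (isY_noncore hu) ct) => ->.
Qed.

(* Here the absence of siblings in the co-mating graph is used. *)
Lemma lifted_cnbh_inj B1 B2 : B1 \in P -> B2 \in P -> lifted_cnbh B1 = lifted_cnbh B2 -> B1 = B2.
Proof.
move=> P1 P2 /setP e; apply/eqP; apply: contraTT (forall_inP E_no_sibling B1 P1) => nB.
rewrite negbK; apply/exists_inP; exists B2; rewrite // eq_sym nB; apply/eqP/setP => B.
have [BP|nBP] := boolP (B \in P); last first.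
  rewrite !inE (negbTE nBP) /= !orbF.
  by apply/eqP/eqP => eB; move: nBP; rewrite eB ?P1 ?P2.
have [w wB hw] := patch_notY BP; move: (e w).
by rewrite !inE hw (pblock_eq BP wB) /= => ->.
Qed.

Lemma eq_patch_key_assemble u v : (patch_key s g u == patch_key s g v) = (pb u == pb v).
Proof.
rewrite !patch_key_assemble; apply/eqP/eqP => [|-> //].
exact: lifted_cnbh_inj (pblock_in u) (pblock_in v).
Qed.

Lemma patch_of_assemble u : patch_of s g u = pb u.
Proof.
apply/setP => y; rewrite !inE eq_patch_key_assemble.
by rewrite eq_pblock ?(partition_trivIset P_partition) ?(cover_partition P_partition).
Qed.

Lemma patches_assemble : patches s g = P.
Proof.
rewrite -[RHS](preim_partition_pblock P_partition) /patches /preim_partition.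
by apply: eq_imset => x; apply/setP => y; rewrite !inE eq_patch_key_assemble.
Qed.

Lemma patch_graph_assemble : patch_graph s g = E.
Proof.
apply/setP => -[B1 B2]; apply/imsetP/idP => [[[a b]] | B12].
  rewrite inE /= eq_patch_key_assemble => /andP [ab /and3P [ha hb nab]] [-> ->].
  by move: ab; rewrite !patch_of_assemble assemble_NN // (negbTE nab) => /andP [].
have /and4P [P1 P2 nB _] := mp_graph_edge B12.
have [w1 w1B h1] := patch_notY P1; have [w2 w2B h2] := patch_notY P2.
have [e1 e2] := (pblock_eq P1 w1B, pblock_eq P2 w2B).
exists (w1, w2); last by rewrite /= !patch_of_assemble e1 e2.
rewrite inE /= h1 h2 eq_patch_key_assemble e1 e2 nB assemble_NN // e1 e2 B12 orbT !andbT.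
by apply: contraNneq nB => e; rewrite -e1 -e2 e.
Qed.

Lemma patch_core_assemble B : B \in P -> patch_core s g B = core B.
Proof.
move=> BP; apply/setP => v; rewrite !inE; apply/idP/idP.
  by case/and3P => vB hv; rewrite has_Yleaf_assemble // (pblock_eq BP vB) negbK.
move=> vc; have vB := subsetP (core_sub BP) v vc; have hv := core_notY BP vc.
by rewrite vB hv has_Yleaf_assemble // (pblock_eq BP vB) vc.
Qed.

Lemma tuft_at_assemble v : ~~ isY s v -> v \notin core (pb v) -> tuft_at s g v = tuft_of v.
Proof.
move=> hv nc; have [_ vt] := tuft_of_noncore nc.
apply/setP => z; rewrite /tuft_at in_setU1 inE; case hz: (isY s z) => /=.
  rewrite (_ : (z == v) = false) ?assemble_NY ?hz //=; last by apply: contraTF hz => /eqP ->.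
  apply/idP/idP => zt; last by case: (mem_tuft_of nc zt) => _ _ ->.
  by case: (mem_tuft_of (isY_noncore hz) zt) => _ _ ->; case: (tuft_of_noncore (isY_noncore hz)).
rewrite orbF; apply/eqP/idP => [-> //|zt].
by apply: (tuft_ok_notY_eq (tuft_ok_tuft_of nc)) zt vt _ hv; rewrite hz.
Qed.

Lemma patch_tufts_assemble B : B \in P -> patch_tufts s g B = tufts B.
Proof.
move=> BP; apply/setP => t; apply/imsetP/idP => [[v Hv ->]|tB].
  move: Hv; rewrite !inE => /and3P [vB hv]; rewrite has_Yleaf_assemble // => nc.
  by rewrite tuft_at_assemble // -(pblock_eq BP vB); case: (tuft_of_noncore nc).
have [c ct xc] := tuft_ok_X (tuft_ok_tufts BP tB); have hc := isX_notY xc.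
have /setDP [cB ncB] := subsetP (tufts_sub BP tB) c ct.
have ec : pb c = B by exact: pblock_eq.
have nc : c \notin core (pb c) by rewrite ec.
exists c; first by rewrite !inE cB hc has_Yleaf_assemble.
by rewrite tuft_at_assemble //; apply/esym/tuft_of_eq; rewrite ?ec.
Qed.

Lemma decompose_assemble : decompose s g = r.
Proof.
have -> : r = MPRaw P E (mp_pdata r) by case: (r).
rewrite /decompose patches_assemble patch_graph_assemble; congr MPRaw.
apply/ffunP => B; rewrite ffunE.
have [BP|nBP] := boolP (B \in P); last first.
  by case/and3P: r_ok => _ _ /forallP /(_ B); rewrite (negbTE nBP) => /eqP.
by rewrite patch_core_assemble // patch_tufts_assemble //; case: (mp_pdata r B).
Qed.

Local Notation N v := (closed_nbh [set: V] g v).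

Lemma assemble_simple : simple_graph_on [set: V] g.
Proof.
apply/forall_inP => -[u v] uv /=; rewrite !in_setT assemble_sym uv andbT.
by move: uv; rewrite inE => /andP [].
Qed.

(* Each vertex is connected to a chosen non-Y vertex of its patch, and the
   chosen vertices of adjacent patches are adjacent. *)
Lemma assemble_connected : connected_on [set: V] g.
Proof.
case/andP: E_connected => /set0Pn [B0 B0P] E_conn.
have [u0 _ _] := patch_notY B0P.
pose rep (B : {set V}) := odflt u0 [pick w in B | ~~ isY s w].
have rep_spec B : B \in P -> rep B \in B /\ ~~ isY s (rep B).
  move=> BP; rewrite /rep; case: pickP => [w /andP [wB hw]|none] //=.
  by have [w wB hw] := patch_notY BP; have := none w; rewrite wB hw.
pose e := [rel a b | (a, b) \in g].
have e_sym : connect_sym e by apply: sym_connect_sym => a b; rewrite /= assemble_sym.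
have to_rep x : connect e x (rep (pb x)).
  have to_repN z : ~~ isY s z -> connect e z (rep (pb z)).
    move=> hz; have [rB hr] := rep_spec _ (pblock_in z).
    have [<-|nz] := eqVneq z (rep (pb z)); first exact: connect0.
    by apply: connect1; rewrite /= assemble_NN // nz (pblock_eq (pblock_in z) rB) eqxx.
  case hx: (isY s x); last by apply: to_repN; rewrite hx.
  have [c [ct xc nb]] := assemble_Y_nbr hx; have [ec _ _] := mem_tuft_of (isY_noncore hx) ct.
  apply: connect_trans (connect1 _) _; first by rewrite /= nb.
  by rewrite -ec; apply: to_repN; exact: isX_notY.
apply/andP; split; first by apply/set0Pn; exists u0.
apply/forall_inP => u _; apply/forall_inP => w _.
apply: connect_trans (to_rep u) _; rewrite e_sym; apply: connect_trans (to_rep w) _; rewrite e_sym.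
apply: (connect_homo (h := rep)) (forall_inP (forall_inP E_conn _ (pblock_in u)) _ (pblock_in w)).
move=> B1 B2 /= B12; have /and4P [P1 P2 nB _] := mp_graph_edge B12.
have [[r1 h1] [r2 h2]] := (rep_spec _ P1, rep_spec _ P2).
apply: connect1; rewrite /= assemble_NN // (pblock_eq P1 r1) (pblock_eq P2 r2) B12 orbT andbT.
by apply: contraNneq nB => ee; rewrite -(pblock_eq P1 r1) ee (pblock_eq P2 r2).
Qed.

Lemma assemble_Y_leaf u : isY s u -> is_leaf [set: V] g u.
Proof.
move=> hu; have [c [_ _ nb]] := assemble_Y_nbr hu.
by apply/cards1P; exists c; apply/setP => w; rewrite in_set1 /open_nbh in_set in_setT nb.
Qed.

Lemma isZ_assemble v : isZ s v = (v \in core (pb v)) && (1 < #|core (pb v)|).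
Proof.
have core_v := core_ok_core (pblock_in v).
apply/idP/andP => [zv|[vc c2]]; last first.
  by case/or3P: core_v => [/eqP e|/andP [/eqP c1 _]|/andP [_ /forall_inP]];
    [rewrite e inE in vc | rewrite c1 in c2 | apply].
have vc : v \in core (pb v).
  apply: contraT => nc; have [_ vt] := tuft_of_noncore nc.
  case/orP: (tuft_ok_isXY (tuft_ok_tuft_of nc) vt) => [/isX_notZ|yv]; first by rewrite zv.
  by move: (isZ_notY zv); rewrite yv.
split=> //; case/or3P: core_v => [/eqP e|/andP [_ /forall_inP al]|/andP [] //].
  by rewrite e inE in vc.
by move: (isX_notZ (al v vc)); rewrite zv.
Qed.

Lemma core_same_nbh u w : u \in core (pb u) -> w \in core (pb u) -> N w = N u.
Proof.
move=> uc wc; have hu := core_notY (pblock_in u) uc; have hw := core_notY (pblock_in u) wc.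
have ew : pb w = pb u.
  by apply: pblock_eq (pblock_in u) _; exact: subsetP (core_sub (pblock_in u)) w wc.
apply/setP => z; case hz: (isY s z).
  have core_Ynbr x : x \in core (pb x) -> ~~ isY s x -> (z \in N x) = false.
    move=> xc hx; rewrite mem_closed_nbhT (negbTE (contraTneq _ hz)) => [/=|-> //].
    rewrite assemble_NY //; apply: contraTF xc => xt.
    by case: (mem_tuft_of (isY_noncore hz) xt).
  by rewrite !core_Ynbr // ew.
have inner x : ~~ isY s x -> (z \in N x) = (z \in lifted_cnbh (pb x)).
  by move=> hx; rewrite -inner_cnbh_assemble // mem_inner_cnbh hz.
by rewrite !inner // ew.
Qed.

Lemma sibling_in_core x x' : ~~ isY s x -> ~~ isY s x' -> x' != x -> N x' = N x ->
  x \in core (pb x) /\ pb x' = pb x.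
Proof.
move=> hx hx' nx e; split.
  apply: contraT => nc; have [y yt hy] := tuft_ok_Y (tuft_ok_tuft_of nc).
  have [_ _ ety] := mem_tuft_of nc yt; have [_ xt] := tuft_of_noncore nc.
  have xy : (x, y) \in g by rewrite assemble_NY // ety.
  have : y \in N x' by rewrite e mem_closed_nbhT xy orbT.
  rewrite mem_closed_nbhT => /orP [/eqP eyx|]; first by move: hx'; rewrite -eyx hy.
  rewrite assemble_NY // ety => x't; case/eqP: nx.
  exact: (tuft_ok_notY_eq (tuft_ok_tuft_of nc)) x't xt hx' hx.
apply: lifted_cnbh_inj (pblock_in _) (pblock_in _) _; rewrite -!inner_cnbh_assemble //.
by apply/setP => z; rewrite !mem_inner_cnbh e.
Qed.

(* No edge of [E] can leave the patch of [c], so by connectivity it is the only patch. *)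
Lemma pendant_notY_vertices c d : ~~ isY s c -> (forall z, ((c, z) \in g) = (z == d)) ->
  isY s d || (pb d == pb c) -> forall z, ~~ isY s z -> z = c \/ z = d.
Proof.
move=> hc nb hd.
have notY_in_patch z : ~~ isY s z -> pb z = pb c -> z = c \/ z = d.
  move=> hz ez; have [-> |nzc] := eqVneq z c; [by left | right].
  by apply/eqP; rewrite -nb assemble_NN // ez eqxx eq_sym nzc.
have no_edge B' : (pb c, B') \notin E.
  apply/negP => cB'; have /and4P [_ P' nB _] := mp_graph_edge cB'.
  have [z zB hz] := patch_notY P'; have ez := pblock_eq P' zB.
  have /eqP ezd : z == d.
    by rewrite -nb assemble_NN // ez cB' orbT andbT; apply: contraNneq nB => ecz; rewrite -ez -ecz.
  by move: hd nB; rewrite -ezd (negbTE hz) ez => /= /eqP ->; rewrite eqxx.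
have single z : pb z = pb c.
  case/andP: E_connected => _ /forall_inP /(_ _ (pblock_in c)) /forall_inP /(_ _ (pblock_in z)).
  case/connectP => -[_ -> //|B1 p /=]; by rewrite (negbTE (no_edge B1)).
by move=> z hz; apply: notY_in_patch.
Qed.

Lemma Y_sibling_XY u w : isY s u -> w != u -> N w = N u -> XY_ok s /\ g = complete_graph V.
Proof.
move=> hu nwu e; have [c [ct xc nb]] := assemble_Y_nbr hu; have hc := isX_notY xc.
have ewc : w = c.
  have : w \in N u by rewrite -e mem_closed_nbhT eqxx.
  by rewrite mem_closed_nbhT (negbTE nwu) nb => /eqP.
subst w.
have nbc z : ((c, z) \in g) = (z == u).
  apply/idP/eqP => [cz|->]; last by rewrite assemble_sym nb.
  have : z \in N u by rewrite -e mem_closed_nbhT cz orbT.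
  rewrite mem_closed_nbhT nb => /orP [/eqP //|/eqP ezc].
  by rewrite ezc (negbTE (assemble_irr c)) in cz.
have hu' : isY s u || (pb u == pb c) by rewrite hu.
have notY_cu := pendant_notY_vertices hc nbc hu'.
have cu z : z = c \/ z = u.
  case hz: (isY s z).
    have [c' [c't xc' nb']] := assemble_Y_nbr hz.
    case: (notY_cu _ (isX_notY xc')) => [ec'|ec'].
      by right; apply/eqP; rewrite -nbc assemble_sym nb' ec'.
    by move: (isX_notY xc'); rewrite ec' hu.
  by apply: notY_cu; rewrite hz.
split; first exact: XY_okI xc hu cu.
by apply: two_vertex_complete assemble_irr assemble_sym cu _; rewrite nbc.
Qed.

Lemma leaf_sibling_E2Z u w : ~~ isY s u -> ~~ isY s w -> w != u -> N w = N u ->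
  is_leaf [set: V] g u -> E2Z_ok s /\ g = complete_graph V.
Proof.
move=> hu hw nwu e lu.
have [uc ewu] := sibling_in_core hu hw nwu e.
have nuw : u != w by rewrite eq_sym.
have [wc _] := sibling_in_core hw hu nuw (esym e).
have uw : (u, w) \in g by rewrite assemble_NN // ewu eqxx eq_sym nwu.
have [x nb] := is_leaf_nbr lu.
have exw : w = x by apply/eqP; rewrite -nb.
subst x.
have hw' : isY s w || (pb w == pb u) by rewrite ewu eqxx orbT.
have notY_uw := pendant_notY_vertices hu nb hw'.
have uw_all z : z = u \/ z = w.
  case hz: (isY s z); last by apply: notY_uw; rewrite hz.
  have nc := isY_noncore hz; have [c ct xc] := tuft_ok_X (tuft_ok_tuft_of nc).
  have [ec ncc _] := mem_tuft_of nc ct.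
  by case: (notY_uw c (isX_notY xc)) => ec'; rewrite ec' ?uc ?wc in ncc.
have wc' : w \in core (pb u) by rewrite -ewu.
have core2 : 1 < #|core (pb u)| by apply/card_gt1P; exists u, w.
split; last exact: two_vertex_complete assemble_irr assemble_sym uw_all uw.
by apply: (E2Z_okI uw_all); rewrite // isZ_assemble ?ewu ?uc ?wc'.
Qed.

Lemma assemble_ok : G_ne2_XXYZ s g \/ ((XY_ok s || E2Z_ok s) /\ g = complete_graph V).
Proof.
have [/andP [ok eK] | not_K] := boolP ((XY_ok s || E2Z_ok s) && (g == complete_graph V)).
  by right; split; last exact/eqP.
left.
have sibling_notY v w : w != v -> N w = N v -> ~~ isY s v /\ ~~ isY s w.
  move=> nwv e; case hv: (isY s v).
    by have [ok eK] := Y_sibling_XY hv nwv e; move: not_K; rewrite ok eK eqxx.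
  case hw: (isY s w) => //; have nvw : v != w by rewrite eq_sym.
  by have [ok eK] := Y_sibling_XY hw nvw (esym e); move: not_K; rewrite ok eK eqxx.
apply/and5P; split; [exact: assemble_simple | exact: assemble_connected | | |].
- apply/forallP => v; apply/eqP; apply/idP/idP => [/exists_inP [w _ /andP [nwv /eqP e]]|].
    have [hv hw] := sibling_notY v w nwv e.
    have nvw : v != w by rewrite eq_sym.
    have [[vc ewv] [wc _]] := (sibling_in_core hv hw nwv e, sibling_in_core hw hv nvw (esym e)).
    by rewrite isZ_assemble vc; apply/card_gt1P; exists v, w; rewrite -{2}ewv eq_sym.
  rewrite isZ_assemble => /andP [vc /card_gt1P [x [y [xc yc nxy]]]].
  have [w wc nwv] : exists2 w, w \in core (pb v) & w != v.
    by have [exv|] := eqVneq x v; [exists y; rewrite // -exv eq_sym | exists x].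
  by apply/exists_inP; exists w; rewrite ?in_setT // nwv (core_same_nbh vc wc) eqxx.
- by apply/forallP => v; apply/implyP; exact: assemble_Y_leaf.
- apply/forallP => v; apply/negP => /andP [lv /exists_inP [w _ /andP [nwv /eqP e]]].
  have [hv hw] := sibling_notY v w nwv e.
  have [ok eK] := leaf_sibling_E2Z hv hw nwv e lv.
  by move: not_K; rewrite ok orbT eK eqxx.
Qed.

End Assembled.

Section LHS.
Variables (V : finType) (s : V -> 'I_3).

Lemma lhs_graph_decompose (x : LHSraw V) : LHS_ok s x ->
  MP_ok s (decompose s (lhs_graph x)) /\ assemble s (decompose s (lhs_graph x)) = lhs_graph x.
Proof.
case: x => [g | [u|u]] /= ok.
- have g_conn : connected_on [set: V] g by case/and5P: ok.
  split; last exact: assemble_decompose (Gne2_irr ok) (Gne2_sym ok) (Gne2_Y_pendant ok).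
  exact: decompose_ok (Gne2_sym ok) (Gne2_Y_pendant ok) g_conn
    (Gne2_Yleaf_carrier_X ok) (Gne2_core_twin_Z ok).
- have [x [y [hx hy nxy xy]]] := XY_ok_vertices ok.
  split; first exact: XY_decompose_ok hx hy nxy xy.
  exact: assemble_decompose (@complete_graph_irr V) (@complete_graph_sym V)
    (XY_Y_pendant hx nxy xy).
- have [a [b [nab ab aZ]]] := E2Z_ok_vertices ok.
  split; first exact: E2Z_decompose_ok nab ab aZ.
  apply: assemble_decompose (@complete_graph_irr V) (@complete_graph_sym V) _ => v.
  by rewrite (negbTE (isZ_notY (aZ v))).
Qed.

Lemma lhs_graph_inj (x y : LHSraw V) :
  LHS_ok s x -> LHS_ok s y -> lhs_graph x = lhs_graph y -> x = y.
Proof.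
have not_Gne2 := @complete_graph_not_Gne2 V s.
case: x => [g|[[]|[]]]; case: y => [g'|[[]|[]]] /= okx oky eg //; try by rewrite eg.
- by move: okx; rewrite eg (negbTE (not_Gne2 _)) ?oky.
- by move: okx; rewrite eg (negbTE (not_Gne2 _)) ?oky ?orbT.
- by move: oky; rewrite -eg (negbTE (not_Gne2 _)) ?okx.
- by move: oky; rewrite (negbTE (XY_ok_not_E2Z okx)).
- by move: oky; rewrite -eg (negbTE (not_Gne2 _)) ?okx ?orbT.
- by move: okx; rewrite (negbTE (XY_ok_not_E2Z oky)).
Qed.

Lemma decompose_lhs_surj (r : MPraw V) : MP_ok s r ->
  exists x, LHS_ok s x /\ decompose s (lhs_graph x) = r.
Proof.
move=> ok; have [G | [/orP two eK]] := assemble_ok ok.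
  by exists (inl (assemble s r)); split; last exact: decompose_assemble.
case: two => [XY | E2Z]; [exists (inr (inl tt)) | exists (inr (inr tt))];
  by split => //=; rewrite -eK decompose_assemble.
Qed.

End LHS.

Theorem theorem3p4 :
  natural_iso3 LHS_ok MP_ok LHS_tr MP_tr.
Proof.
exists (fun V s x => decompose s (lhs_graph x)); split.
- by move=> V s x /lhs_graph_decompose [].
- move=> V s x y okx oky e; apply: (lhs_graph_inj okx oky).
  by have [[_ <-] [_ <-]] := (lhs_graph_decompose okx, lhs_graph_decompose oky); rewrite e.
- by move=> V s r; exact: decompose_lhs_surj.
- move=> V W s t f f_bij f_sort x _.
  by rewrite (lhs_graph_transport f_bij) (decompose_transport f_bij f_sort).
Qed.
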